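(* Let $n\geq 2$ and let $C$ be a $2$-null completely regular code in $G_n$ with covering radius $\rho\geq 2$ and parameter matrix $[a_0,b_0|c_1,a_1,b_1|\ldots|c_\rho,a_\rho]$, such that $\mathbf{0}\in C$. Then every word of type $1100$ that lies in $C_2$ is adjacent to exactly $c_2-2$ words of weight three that lie in $C_1$.
   Context: $G_n$ is the graph with vertex set $\mathbb{Z}^n$ in which $x,y$ are adjacent iff $\sum_{i=1}^n|x_i-y_i|=1$; $d$ is its graph distance, and the weight of $x$ is $d(x,\mathbf{0})=\sum_i|x_i|$, where $\mathbf{0}$ is the all-zero word. For a vertex set $C$ (a code), $\rho=\max_v d(v,C)$ is its covering radius and $C_i=\{v: d(v,C)=i\}$, so $C_0=C$. $C$ is a completely regular code (CRC) if for all $i,j\in\{0,\ldots,\rho\}$ there is a number $\alpha_{ij}$ such that every vertex of $C_i$ has exactly $\alpha_{ij}$ neighbours in $C_j$, and $\alpha_{ij}=0$ whenever $|i-j|>1$. Writing $a_i=\alpha_{ii}$, $b_i=\alpha_{i,i+1}$, $c_i=\alpha_{i,i-1}$, the parameter matrix is written $[a_0,b_0|c_1,a_1,b_1|\ldots|c_\rho,a_\rho]$. A CRC is $r$-null if $a_0=\cdots=a_{r-1}=0$. The type of a word of weight at most four is the sequence of its four largest absolute values of entries, in nonincreasing order (padded by zeros); e.g. type $1100$ means exactly two entries equal $\pm1$ and all others $0$. *)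

From mathcomp Require Import all_boot all_order all_algebra.
Set Implicit Arguments. Unset Strict Implicit. Unset Printing Implicit Defensive.
Import Order.TTheory GRing.Theory Num.Theory.

(* Vertices of G_n: words in Z^n. *)
Definition word (n : nat) := {ffun 'I_n -> int}.

Definition zero_word (n : nat) : word n := [ffun => 0%R].

Definition dist (n : nat) (x y : word n) : nat :=
  (\sum_(i < n) `|(x i - y i)%R|%N)%N.

Definition adj (n : nat) (x y : word n) : Prop := dist x y = 1%N.

Definition weight (n : nat) (x : word n) : nat := dist x (zero_word n).

Definition code (n : nat) := word n -> Prop.

Definition dist_code (n : nat) (C : code n) (v : word n) (i : nat) : Prop :=
  (exists c, C c /\ dist v c = i) /\ (forall c, C c -> (i <= dist v c)%N).

Definition layer (n : nat) (C : code n) (i : nat) (v : word n) : Prop :=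
  dist_code C v i.

Definition covering_radius (n : nat) (C : code n) (rho : nat) : Prop :=
  (forall v, exists i, (i <= rho)%N /\ layer C i v) /\
  (exists v, layer C rho v).

Definition exactly (n : nat) (k : nat) (P : word n -> Prop) : Prop :=
  exists s : seq (word n), uniq s /\ size s = k /\ (forall y, y \in s <-> P y).

(* C is completely regular with covering radius rho and intersection numbers
   alpha i j (so a_i = alpha i i, b_i = alpha i i.+1, c_i = alpha i i.-1). *)
Definition crc_params (n : nat) (C : code n) (rho : nat)
    (alpha : nat -> nat -> nat) : Prop :=
  covering_radius C rho /\
  (forall i j, (i <= rho)%N -> (j <= rho)%N ->
     forall v, layer C i v -> exactly (alpha i j) (fun y => adj v y /\ layer C j y)) /\
  (forall i j, (i <= rho)%N -> (j <= rho)%N -> (j.+1 < i)%N \/ (i.+1 < j)%N ->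
     alpha i j = 0%N).

Definition r_null (alpha : nat -> nat -> nat) (r : nat) : Prop :=
  forall i, (i < r)%N -> alpha i i = 0%N.

Definition type1100 (n : nat) (x : word n) : Prop :=
  exists i j : 'I_n, i != j /\ `|x i|%N = 1%N /\ `|x j|%N = 1%N /\
    (forall k, k != i -> k != j -> x k = 0%R).

From mathcomp Require Import all_boot all_order all_algebra.
From mathcomp Require Import zify.
Import Order.TTheory GRing.Theory Num.Theory.
Set Implicit Arguments. Unset Strict Implicit.

(* A word x of type 1100 with nonzero entries at i and j has weight 2, so a
   neighbour of x has weight 1 or 3.  The neighbours of weight 1 are the two
   words obtained by zeroing x_i or x_j; they are adjacent to the codeword 0
   and cannot lie in C since d(x, C) = 2, hence both lie in C_1.  Removing
   them from the c_2 neighbours of x in C_1 leaves the c_2 - 2 words of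
   weight three. *)

Definition zero_at n (x : word n) (l : 'I_n) : word n :=
  [ffun k => if k == l then 0%R else x k].

Lemma dist_eq0 n (x y : word n) : dist x y = 0%N -> x = y.
Proof.
rewrite /dist => /eqP; rewrite sum_nat_eq0 => /forallP dx0.
apply/ffunP => k; have := dx0 k.
by rewrite absz_eq0 subr_eq0 => /eqP.
Qed.

Lemma adjP n (x y : word n) : adj x y ->
  exists m, `|(x m - y m)%R|%N = 1%N /\ forall k, k != m -> x k = y k.
Proof.
rewrite /adj /dist => dxy.
have [m dm | dm0] := pickP (fun m => `|(x m - y m)%R|%N != 0%N); last first.
  by move: dxy; rewrite big1 // => k _; apply/eqP/negbFE/dm0.
move: dxy; rewrite (bigD1 m) //=.
set rest := (\sum_(k < n | k != m) _)%N => dxy.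
have /eqP : rest = 0%N by move: dm dxy; set a := `|_|%N; lia.
rewrite sum_nat_eq0 => /forallP rest0; exists m; split.
  by move: dm dxy; set a := `|_|%N; lia.
move=> k km; have /implyP/(_ km)/eqP := rest0 k.
by move=> d0; apply/eqP; rewrite -subr_eq0; apply/eqP; lia.
Qed.

Lemma weight_eq_off n (x y : word n) m :
  (forall k, k != m -> x k = y k) ->
  (weight y + `|x m|%N = weight x + `|y m|%N)%N.
Proof.
move=> xy; rewrite /weight /dist (bigD1 m) //= [in RHS](bigD1 m) //= !ffunE !subr0.
rewrite (eq_bigr (fun k => `|(x k - zero_word n k)%R|%N)).
  by rewrite addnAC [RHS]addnAC; congr (_ + _); rewrite addnC.
by move=> k km; rewrite xy.
Qed.

Lemma dist_zero_at n (x : word n) l : dist x (zero_at x l) = `|x l|%N.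
Proof.
rewrite /dist (bigD1 l) //= big1 ?ffunE ?eqxx ?subr0 ?addn0 //.
by move=> k kl; rewrite ffunE (negbTE kl) subrr.
Qed.

Lemma weight_zero_at n (x : word n) l :
  (weight (zero_at x l) + `|x l| = weight x)%N.
Proof.
have := @weight_eq_off n x (zero_at x l) l.
rewrite ffunE eqxx addn0 => -> // k kl.
by rewrite ffunE (negbTE kl).
Qed.

Lemma layer1_of_adj_layer2 n (C : code n) (x y c : word n) :
  layer C 2 x -> adj x y -> C c -> dist y c = 1%N -> layer C 1 y.
Proof.
move=> [_ x_far] xy Cc yc; split; first by exists c.
move=> c' Cc'; rewrite lt0n; apply/negP => /eqP /dist_eq0 yc'.
by have := x_far c' Cc'; rewrite -yc' xy.
Qed.

Lemma exactly_split n k (P R : word n -> Prop) (Q : pred (word n))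
    (r : seq (word n)) :
  exactly k P -> uniq r -> (forall y, y \in r <-> P y /\ ~~ Q y) ->
  (forall y, R y <-> P y /\ Q y) ->
  exists k', (k' + size r)%N = k /\ exactly k' R.
Proof.
move=> [s [s_uniq [<- sP]]] r_uniq rP RP.
exists (size [seq y <- s | Q y]); split.
  have r_perm : perm_eq [seq y <- s | predC Q y] r.
    apply: uniq_perm; [exact: filter_uniq | exact: r_uniq |].
    by move=> y; rewrite mem_filter; apply/andP/idP => [[? /sP] | /rP [/sP]];
      [move=> Py; apply/rP | move=> *; split].
  by rewrite -(perm_size r_perm) !size_filter count_predC.
exists [seq y <- s | Q y]; split; first exact: filter_uniq.
split=> // y; rewrite mem_filter RP.
by split=> [/andP [Qy /sP Py] | [/sP sy Qy]] //; apply/andP.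
Qed.

Section Type1100.
Variables (n : nat) (x : word n) (i j : 'I_n).
Hypotheses (ij : i != j) (xi : `|x i|%N = 1%N) (xj : `|x j|%N = 1%N)
  (x0 : forall k, k != i -> k != j -> x k = 0%R).

Lemma weight_type1100 : weight x = 2%N.
Proof.
rewrite /weight /dist (bigD1 i) //= (bigD1 j) /=; last by rewrite eq_sym.
rewrite big1 ?ffunE ?subr0; first by lia.
by move=> k /andP [ki kj]; rewrite ffunE subr0 x0.
Qed.

Lemma weight_zero_at_type1100 l : `|x l|%N = 1%N -> weight (zero_at x l) = 1%N.
Proof. by move=> xl; have := weight_zero_at x l; rewrite weight_type1100 xl; lia. Qed.

Lemma zero_at_type1100_neq : zero_at x i != zero_at x j.
Proof.
apply/eqP => /ffunP/(_ j); rewrite !ffunE eqxx eq_sym (negbTE ij) => xj0.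
by move: xj; rewrite xj0.
Qed.

Lemma adj_type1100 y : adj x y -> weight y != 3%N ->
  y = zero_at x i \/ y = zero_at x j.
Proof.
move=> /adjP [m [xym xy]] /eqP wy3.
have := weight_eq_off xy; rewrite weight_type1100 => wy.
have y_zero_at : `|x m|%N = 1%N -> y = zero_at x m.
  move=> xm; have ym0 : y m = 0%R by move: xym wy wy3; lia.
  apply/ffunP => k; rewrite ffunE.
  by case: (eqVneq k m) => [-> | km]; last rewrite xy.
case: (eqVneq m i) => [mi | mi]; first by subst m; left; exact: y_zero_at.
case: (eqVneq m j) => [mj | mj]; first by subst m; right; exact: y_zero_at.
(* lia does not terminate with the implication [y_zero_at] in context. *)
by move: xym wy wy3; rewrite x0 //; clear y_zero_at; lia.
Qed.

End Type1100.

Theorem mainTheorem1 (n : nat) (C : code n) (rho : nat)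
    (alpha : nat -> nat -> nat) :
  (2 <= n)%N ->
  crc_params C rho alpha ->
  r_null alpha 2 ->
  (2 <= rho)%N ->
  C (zero_word n) ->
  forall x : word n, type1100 x -> layer C 2 x ->
    exists k, (k + 2)%N = alpha 2%N 1%N /\
      exactly k (fun y => adj x y /\ weight y = 3%N /\ layer C 1 y).
Proof.
move=> _ [_ [regular _]] _ rho2 C0 x [i [j [ij [xi [xj x0]]]]] x2.
have nbrs21 := regular 2%N 1%N rho2 (ltnW rho2) x x2.
have zero_at_in l : `|x l|%N = 1%N ->
    (adj x (zero_at x l) /\ layer C 1 (zero_at x l)) /\ weight (zero_at x l) != 3%N.
  move=> xl; have adj_l : adj x (zero_at x l) by rewrite /adj dist_zero_at.
  have w1 := weight_zero_at_type1100 ij xi xj x0 xl.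
  by split; [split=> //; exact: layer1_of_adj_layer2 x2 adj_l C0 w1 | rewrite w1].
apply: (exactly_split (r := [:: zero_at x i; zero_at x j])
          (Q := fun y => weight y == 3%N) nbrs21).
- by rewrite /= inE zero_at_type1100_neq.
- move=> y; rewrite !inE; split.
    by case/orP => /eqP ->; apply: zero_at_in.
  by move=> [[xy _] wy]; case: (adj_type1100 ij xi xj x0 xy wy) => ->;
    rewrite eqxx ?orbT.
- by move=> y; split=> [[? [/eqP ? ?]] | [[? ?] /eqP ?]].
Qed.
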